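(* Let $d\ge2$, $q\ge1$, $p>\widehat p_c$ and $p\notin\mathcal U(q)$, and let $\Phi$ be the infinite-volume FK measure with parameters $p,q$. Let $w_1>0$ be such that $\lim_{n\to\infty}n^{-(d-1)/d}\ln\Phi(n\le|C(0)|<\infty)=-w_1$. Then for every $x\in\mathbb{Z}^d$, $$\lim_{n\to\infty}\frac1{n^{(d-1)/d}}\ln p_x=-w_1,$$ where $p_x=\Phi(x\text{ is the mass center of an } n\text{-large cluster})$.
   Context: FK model: $\Phi$ is the common infinite-volume limit (existing for $p\notin\mathcal U(q)$, an at most countable set) of the finite-volume measures $\Phi^{\pi,p,q}_\Lambda(\omega)\propto\prod_e p^{\omega(e)}(1-p)^{1-\omega(e)}q^{\mathrm{cl}_\pi(\omega)}$ on nearest-neighbour bonds of $\mathbb{Z}^d$; it is translation invariant. $\widehat p_c$ is, for $d=2$, the critical point for exponential decay of dual connectivities and, for $d\ge3$, the limit of the critical points for percolation in slabs. It is a known result (cited) that for such $p,q$ the limit $\lim_n n^{-(d-1)/d}\ln\Phi(n\le|C(0)|<\infty)$ exists and equals $-w_1$ for some $w_1>0$. $C(0)$ is the open cluster of the origin. Mass center of finite $C$: $M_C=\lfloor\frac1{|C|}\sum_{y\in C}y\rfloor$ (coordinatewise integer parts); an $n$-large cluster is a finite cluster with $|C|\ge n$. *)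

From HB Require Import structures.
From mathcomp Require Import all_boot all_order all_algebra.
From mathcomp Require Import finmap.
From mathcomp Require Import all_classical all_reals all_analysis.
Set Implicit Arguments. Unset Strict Implicit. Unset Printing Implicit Defensive.
Import Order.TTheory GRing.Theory Num.Theory.
Import numFieldNormedType.Exports.
Local Open Scope classical_set_scope.
Local Open Scope ring_scope.

Definition vtx (d : nat) := {ffun 'I_d -> int}.

Definition unitv (d : nat) (i : 'I_d) : vtx d := [ffun j => ((j == i) : nat)%:Z].

(* The bond {x, x + e_i} is represented (uniquely) by the pair (x, i). *)
Definition bond (d : nat) := (vtx d * 'I_d)%type.

(* configurations omega : bonds -> {0,1} (true = open) *)
Definition config (d : nat) := bond d -> bool.

Definition adj d (om : config d) (x y : vtx d) : Prop :=
  exists i : 'I_d, (y = x + unitv i /\ om (x, i)) \/ (x = y + unitv i /\ om (y, i)).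

Definition conn d (om : config d) (x y : vtx d) : Prop :=
  exists s : seq (vtx d), path (fun a b => `[< adj om a b >]) x s /\ last x s = y.

Definition cluster d (om : config d) (x : vtx d) : set (vtx d) := [set y | conn om x y].

Definition csize d (C : set (vtx d)) : nat := #|` fset_set C |%fset.

(* mass center M_C = floor((1/|C|) sum_{y in C} y), coordinatewise;
   for k > 0, (s %/ k)%Z is the floor of s / k *)
Definition mass_center d (C : set (vtx d)) : vtx d :=
  [ffun i => ((\sum_(y <- fset_set C) y i) %/ (csize C)%:Z)%Z].

Definition large_finite_origin d (n : nat) : set (config d) :=
  [set om | finite_set (cluster om (0%R : vtx d)) /\ (n <= csize (cluster om (0%R : vtx d)))%N].

Definition mass_center_event d (n : nat) (x : vtx d) : set (config d) :=
  [set om | exists y : vtx d, finite_set (cluster om y) /\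
     (n <= csize (cluster om y))%N /\ mass_center (cluster om y) = x].

Definition cyl d : set (set (config d)) := [set [set om : config d | om e] | e in [set: bond d]].
Definition configT (d : nat) := g_sigma_algebraType (@cyl d).

Definition translate d (x : vtx d) (om : config d) : config d := fun e => om (e.1 + x, e.2).

Definition box d (N : nat) : seq (vtx d) :=
  [seq [ffun i => (f i : nat)%:Z - N%:Z] | f : {ffun 'I_d -> 'I_(N.*2.+1)}].

Definition bonds_in d (V : seq (vtx d)) : seq (bond d) :=
  [seq (x, i) | x <- V, i <- [seq i <- enum 'I_d | x + unitv i \in V]].

Definition glue d (Eb : seq (bond d)) (eta : {ffun 'I_(size Eb) -> bool})
  (pi : config d) : config d :=
  fun e => if (insub (index e Eb) : option 'I_(size Eb)) is Some j then eta j else pi e.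

Definition ncl d (V : seq (vtx d)) (om : config d) : nat :=
  \sum_(j < size V)
     (if `[< exists2 k : 'I_(size V), (k < j)%N &
              conn om (nth 0%R V k) (nth 0%R V j) >] then 0 else 1)%N.

Section FK.
Variable R : realType.

Definition fk_weight d (V : seq (vtx d)) (Eb : seq (bond d)) (pi : config d)
  (p q : R) (eta : {ffun 'I_(size Eb) -> bool}) : R :=
  (\prod_(j < size Eb) (if eta j then p else 1 - p)) * q ^+ ncl V (glue eta pi).

Definition fk_fin d (V : seq (vtx d)) (Eb : seq (bond d)) (pi : config d)
  (p q : R) (A : set (config d)) : R :=
  (\sum_(eta : {ffun 'I_(size Eb) -> bool})
      (if `[< A (glue eta pi) >] then fk_weight V pi p q eta else 0))
  / (\sum_(eta : {ffun 'I_(size Eb) -> bool}) fk_weight V pi p q eta).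

Definition fk_box d (N : nat) (pi : config d) (p q : R) (A : set (config d)) : R :=
  fk_fin (box d N) (bonds_in (box d N)) pi p q A.

(* Phi is the common infinite-volume limit (as Lambda_N grows to Z^d) of the
   measures Phi^{pi,p,q}_{Lambda_N}, for every boundary condition pi:
   convergence on every cylinder event. *)
Definition is_FK_limit d (p q : R) (Phi : probability (configT d) R) : Prop :=
  forall (pi : config d) (F : seq (bond d)) (eta : config d),
    let A := [set om : config d | forall e, e \in F -> om e = eta e] in
    (fun N : nat => fk_box N pi p q A) @ \oo --> (fine (Phi A) : R).

Definition slab d (L n : nat) : seq (vtx d) :=
  [seq x : vtx d <- box d (maxn n L) | [forall i : 'I_d,
     if (i < 2)%N then `|x i| <= n%:Z else (0 <= x i) && (x i <= L%:Z)]].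

Definition free_bc d : config d := fun _ => false.

Definition phat_slab d (q : R) (L : nat) : R :=
  inf [set p : R | 0 <= p <= 1 /\
    exists2 c : R, 0 < c & exists n0 : nat, forall n : nat, (n0 <= n)%N ->
      forall x y, x \in slab d L n -> y \in slab d L n ->
        c <= fk_fin (slab d L n) (bonds_in (slab d L n)) (@free_bc d) p q
               [set om | conn om x y]].

(* The dual vertex f stands for the face with lower-left
   corner f; the dual bond {f, f + e_i} crosses the primal bond (f + e_i, 1 - i);
   a dual bond is open iff the primal bond it crosses is closed. *)
Definition oth (i : 'I_2) : 'I_2 := if i == ord0 then ord_max else ord0.

Definition dual_adj (om : config 2) (f g : vtx 2) : Prop :=
  exists i : 'I_2, (g = f + unitv i /\ ~~ om (f + unitv i, oth i)) \/
                   (f = g + unitv i /\ ~~ om (g + unitv i, oth i)).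

Definition dual_conn (om : config 2) (f g : vtx 2) : Prop :=
  exists s : seq (vtx 2), path (fun a b => `[< dual_adj om a b >]) f s /\ last f s = g.

Definition wired_bc d : config d := fun _ => true.

Definition dual_exp_decay (p q : R) : Prop :=
  exists2 c : R, 0 < c & forall n N : nat, (n <= N)%N ->
    fk_box N (@wired_bc 2) p q
      [set om | exists g : vtx 2, (exists i, n%:Z <= `|g i|) /\ dual_conn om 0%R g]
    <= expR (- c * n%:R).

Definition phat_2 (q : R) : R := inf [set p : R | 0 <= p <= 1 /\ dual_exp_decay p q].

Definition phat_c (d : nat) (q : R) : R :=
  if d == 2%N then phat_2 q else lim ((fun L => phat_slab d q L) @ \oo).

End FK.

From Pilot Require Import Defs.
From HB Require Import structures.
From mathcomp Require Import all_boot all_order all_algebra.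
From mathcomp Require Import finmap.
From mathcomp Require Import all_classical all_reals all_analysis.
Import Order.TTheory GRing.Theory Num.Theory.
Import numFieldNormedType.Exports.
Local Open Scope classical_set_scope.
Local Open Scope ring_scope.
From mathcomp Require Import ring lra zify.
Set Implicit Arguments. Unset Strict Implicit.

(* Write [a_n = Phi(n <= |C(0)| < oo)], [b_n = Phi(x is the mass center of an n-large
   cluster)] and [s_n = n^((d-1)/d)]. By translation invariance, a cluster of the origin
   of size in [n, 2n] has its mass center in a box of side [4n+1], each position of which
   costs at most [b_n], so [a_n <= (4n+1)^d b_n + a_(2n+1)]; and a cluster of size [m >= n]
   with mass center [x] is the cluster of a vertex within distance [m] of [x], so
   [b_n <= sum_(m >= n) (2m+1)^d a_m]. As [a_n = exp(-w1 s_n + o(s_n))] and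
   [s_(2n+1) >= 2^((d-1)/d) s_n], the term [a_(2n+1)] is negligible against [a_n];
   polynomial factors and the tail sum, summable since [exp(-eps s_m)] beats every power
   of [m], are [exp(o(s_n))]. Hence [b_n = exp(-w1 s_n + o(s_n))] too. *)

Lemma sumr_const_seq (V : nmodType) (I : Type) (s : seq I) (c : V) :
  \sum_(i <- s) c = c *+ size s.
Proof. by elim: s => [|i s IH]; rewrite ?big_nil ?big_cons ?IH ?mulrS. Qed.

Section Clusters.
Variable d : nat.
Implicit Types (om : config d) (x y a b v : vtx d) (C : set (vtx d)).

Lemma path_adj_map (P Q : vtx d -> vtx d -> Prop) (f : vtx d -> vtx d) a s :
  (forall u v, P u v -> Q (f u) (f v)) ->
  path (fun u v => `[< P u v >]) a s -> path (fun u v => `[< Q u v >]) (f a) (map f s).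
Proof.
move=> PQ; elim: s a => //= c s IH a /andP[/asboolP Pac pc].
by rewrite IH // andbT; apply/asboolP; apply: PQ.
Qed.

Lemma adj_translate om x a b :
  adj (translate x om) a b <-> adj om (a + x) (b + x).
Proof.
split=> -[i [[e h]|[e h]]]; exists i.
- by left; split; [rewrite e addrAC|].
- by right; split; [rewrite e addrAC|].
- by left; split=> //; apply: (addIr x); rewrite e addrAC.
- by right; split=> //; apply: (addIr x); rewrite e addrAC.
Qed.

Lemma conn_translate om x a b :
  conn (translate x om) a b <-> conn om (a + x) (b + x).
Proof.
split=> -[s [sp sl]].
- exists (map (+%R^~ x) s); split; last by rewrite (last_map (+%R^~ x)) sl.
  by apply: path_adj_map sp => u v /adj_translate.
- exists (map (fun v => v - x) s); split.
    rewrite -[a](addrK x); apply: path_adj_map sp => u v h.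
    by apply/adj_translate; rewrite !subrK.
  by rewrite -[a in last a _](addrK x) (last_map (fun v => v - x)) sl addrK.
Qed.

Lemma cluster_translate om x y :
  Defs.cluster (translate x om) y = (+%R^~ x) @^-1` Defs.cluster om (y + x).
Proof. by apply/seteqP; split=> v; rewrite /Defs.cluster /= conn_translate. Qed.

Lemma conn_refl om x : conn om x x.
Proof. by exists [::]. Qed.

Lemma conn_trans om a b c : conn om a b -> conn om b c -> conn om a c.
Proof.
move=> [s1 [p1 l1]] [s2 [p2 l2]]; exists (s1 ++ s2).
by rewrite cat_path last_cat l1 p1 p2 l2.
Qed.

Lemma conn_path_mem om y s v :
  path (fun a b => `[< adj om a b >]) y s -> v \in s -> conn om y v.
Proof.
have conn1 a b : adj om a b -> conn om a b.
  by exists [:: b]; rewrite /= andbT; split=> //; apply/asboolP.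
elim: s y => //= c s IH y /andP[/asboolP yc cs]; rewrite inE => /orP[/eqP->|vs].
  exact: conn1.
exact: conn_trans (conn1 _ _ yc) (IH c cs vs).
Qed.

Lemma adj_coord_dist om a b i : adj om a b -> `|b i - a i| <= 1.
Proof.
case=> j [[-> _]|[-> _]]; rewrite !ffunE.
  by rewrite addrAC subrr add0r; case: (i == j).
by rewrite opprD addrA subrr add0r normrN; case: (i == j).
Qed.

Lemma path_coord_dist om y s i :
  path (fun a b => `[< adj om a b >]) y s -> `|last y s i - y i| <= (size s)%:Z.
Proof.
elim: s y => /= [|c s IH] y; first by rewrite subrr normr0.
move=> /andP[/asboolP yc cs]; rewrite -addn1 PoszD.
apply: le_trans (ler_distD (c i) _ _) _.
by apply: lerD; [apply: IH | apply: adj_coord_dist yc].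
Qed.

Lemma csize_cluster_gt0 om y : finite_set (Defs.cluster om y) ->
  (0 < csize (Defs.cluster om y))%N.
Proof.
move=> fC; rewrite /csize cardfs_gt0; apply/fset0Pn; exists y.
by rewrite in_fset_set // inE; apply: conn_refl.
Qed.

(* A shortest open path from [y] to [v] visits distinct vertices of the cluster. *)
Lemma cluster_coord_dist om y v i : finite_set (Defs.cluster om y) ->
  Defs.cluster om y v -> `|v i - y i| <= (csize (Defs.cluster om y))%:Z - 1.
Proof.
move=> fC [s [sp <-]]; have [s' sp' s'_uniq _] := shortenP sp.
have s'_size : (size (y :: s') <= csize (Defs.cluster om y))%N.
  apply: uniq_leq_size => // w; rewrite inE in_fset_set // inE.
  by case/orP=> [/eqP->|ws]; [apply: conn_refl | apply: conn_path_mem sp' ws].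
apply: le_trans (path_coord_dist i sp') _.
by rewrite lerBrDr -PoszD lez_nat addn1.
Qed.

Lemma mass_center_bounded C (lo hi : int) i :
  finite_set C -> (0 < csize C)%N -> (forall v, C v -> lo <= v i <= hi) ->
  lo <= mass_center C i <= hi.
Proof.
move=> fC C0 Cb; set k := csize C; have k0 : 0 < k%:Z by rewrite ltz_nat.
have sum_bounds : lo * k%:Z <= \sum_(v <- fset_set C) v i <= hi * k%:Z.
  rewrite -natz !mulr_natr /k /csize -!(sumr_const_seq (fset_set C)) !big_seq.
  by apply/andP; split; apply: ler_sum => v;
    rewrite in_fset_set // inE => /Cb /andP[].
case/andP: sum_bounds => sl sr.
rewrite /mass_center ffunE lez_divRL // sl /= -ltzD1 ltz_divLR //.
by apply: le_lt_trans sr _; rewrite mulrDl mul1r ltrDl.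
Qed.

Lemma mass_center_cluster_dist om y i : finite_set (Defs.cluster om y) ->
  `|mass_center (Defs.cluster om y) i - y i| <= (csize (Defs.cluster om y))%:Z - 1.
Proof.
move=> fC; rewrite ler_distl; apply: mass_center_bounded => // [|v Cv].
  exact: csize_cluster_gt0.
by rewrite -ler_distl; apply: cluster_coord_dist.
Qed.

End Clusters.

Section ClusterEvents.
Variable d : nat.
Implicit Types (om : config d) (x y v : vtx d) (C : set (vtx d)).

Definition translate_set x C : set (vtx d) := (+%R^~ x) @^-1` C.

Lemma translate_setE x C : translate_set x C = (fun v => v - x) @` C.
Proof.
apply/seteqP; split=> v /=; last by move=> [w Cw <-]; rewrite /translate_set /= subrK.
by move=> Cvx; exists (v + x); rewrite ?addrK.
Qed.

Lemma finite_translate_set x C : finite_set (translate_set x C) = finite_set C.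
Proof.
apply/propext; split=> fC; last by apply: finite_preimage => // u v _ _; apply: addIr.
suff -> : C = translate_set (- x) (translate_set x C).
  by apply: finite_preimage => // u v _ _; apply: addIr.
by apply/seteqP; split=> v; rewrite /translate_set /= subrK.
Qed.

Lemma csize_translate_set x C : finite_set C -> csize (translate_set x C) = csize C.
Proof.
move=> fC; rewrite /csize translate_setE fset_set_image // card_imfset //.
exact: addIr.
Qed.

Lemma mass_center_translate_set x C : finite_set C -> (0 < csize C)%N ->
  mass_center (translate_set x C) = mass_center C - x.
Proof.
move=> fC C0; apply/ffunP => i; rewrite /mass_center csize_translate_set // !ffunE.
rewrite translate_setE fset_set_image // big_imfset /=; last first.
  by move=> u v _ _; apply: addIr.
under eq_bigr do rewrite ffunE.
rewrite big_split /= sumr_const_seq -mulr_natr natz addrC divzMDl; last first.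
  by rewrite gt_eqF // ltz_nat.
by rewrite ffunE addrC.
Qed.

Definition cluster_event y (P : set (vtx d) -> Prop) : set (config d) :=
  [set om | finite_set (Defs.cluster om y) /\ P (Defs.cluster om y)].

Lemma eq_cluster_event y (P Q : set (vtx d) -> Prop) :
  (forall C, finite_set C -> P C <-> Q C) -> cluster_event y P = cluster_event y Q.
Proof. by move=> PQ; apply/seteqP; split=> om [fC PC]; split=> //; apply/(PQ _ fC). Qed.

Lemma cluster_event_translate x y P :
  translate x @^-1` cluster_event y P =
  cluster_event (y + x) (fun C => P (translate_set x C)).
Proof.
by apply/seteqP; split=> om; rewrite /cluster_event /= cluster_translate
  -/(translate_set x _) finite_translate_set.
Qed.

Lemma large_finite_originE n :
  large_finite_origin n = cluster_event 0 (fun C => (n <= csize C)%N).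
Proof. by []. Qed.

Lemma mass_center_eventE n x : mass_center_event n x =
  \bigcup_y cluster_event y (fun C => (n <= csize C)%N /\ mass_center C = x).
Proof.
by apply/seteqP; split=> om /=; [move=> [y h]; exists y | move=> [y _ h]; exists y].
Qed.

End ClusterEvents.

Section Measurability.
Variable d : nat.
Implicit Types (a b y : vtx d).

Lemma measurable_cylinder (P : Prop) e : measurable [set om : configT d | P /\ om e].
Proof.
have [HP|nP] := pselect P.
  suff -> : [set om : configT d | P /\ om e] = [set om | om e].
    by apply: sub_sigma_algebra; exists e.
  by apply/seteqP; split=> om /=; [case|split].
suff -> : [set om : configT d | P /\ om e] = set0 by [].
by apply/seteqP; split=> om /=; [case|].
Qed.

Lemma measurable_adj a b : measurable [set om : configT d | adj om a b].
Proof.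
suff -> : [set om : configT d | adj om a b] =
    \bigcup_(i : 'I_d) ([set om | b = a + unitv i /\ om (a, i)] `|`
                        [set om | a = b + unitv i /\ om (b, i)]).
  apply: countable_bigcupT_measurable; first exact: countableP.
  by move=> i; apply: measurableU; apply: measurable_cylinder.
by apply/seteqP; split=> om /=; [move=> [i h]; exists i | move=> [i _ h]; exists i].
Qed.

Lemma measurable_path a s :
  measurable [set om : configT d | path (fun u v => `[< adj om u v >]) a s].
Proof.
elim: s a => [|c s IH] a /=.
  by rewrite (_ : [set _ | true] = setT) //; apply/seteqP.
suff -> : [set om : configT d |
      `[< adj om a c >] && path (fun u v => `[< adj om u v >]) c s]
    = [set om | adj om a c] `&` [set om | path (fun u v => `[< adj om u v >]) c s].
  exact: measurableI (measurable_adj a c) (IH c).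
by apply/seteqP; split=> om /=; [case/andP=> /asboolP | case=> /asboolP ->].
Qed.

Lemma measurable_conn a b : measurable [set om : configT d | conn om a b].
Proof.
suff -> : [set om : configT d | conn om a b] =
    \bigcup_(s : seq (vtx d)) (if last a s == b then
      [set om | path (fun u v => `[< adj om u v >]) a s] else set0).
  apply: countable_bigcupT_measurable; first exact: countableP.
  by move=> s; case: eqP => _; [apply: measurable_path | apply: measurable0].
apply/seteqP; split=> om /=; first by move=> [s [sp <-]]; exists s; rewrite ?eqxx.
by move=> [s _]; case: eqP => // sl sp; exists s.
Qed.

Lemma measurable_cluster_eq y (S : {fset vtx d}) :
  measurable [set om : configT d | Defs.cluster om y = [set` S]].
Proof.
suff -> : [set om : configT d | Defs.cluster om y = [set` S]] =
    ~` \bigcup_v (if v \in S then ~` [set om | conn om y v] else [set om | conn om y v]).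
  apply: measurableC; apply: countable_bigcupT_measurable; first exact: countableP.
  by move=> v; case: (v \in S); [apply: measurableC|]; apply: measurable_conn.
apply/seteqP; split=> om /=.
  move=> CS [v _]; have : conn om y v <-> v \in S.
    by rewrite -[conn _ _ _]/(Defs.cluster om y v) CS.
  by case: (v \in S) => /= -[yv vy]; [apply; apply: vy | move/yv].
move=> h; apply/seteqP; split=> v /= hv; apply: contrapT => nv; apply: h; exists v => //.
  by have /negbTE -> : v \notin S by apply/negP.
by rewrite hv.
Qed.

Lemma measurable_cluster_event y (P : set (vtx d) -> Prop) :
  measurable (cluster_event y P : set (configT d)).
Proof.
suff -> : (cluster_event y P : set (configT d)) = \bigcup_(S : {fset vtx d})
    (if `[< P [set` S] >] then [set om | Defs.cluster om y = [set` S]] else set0).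
  apply: countable_bigcupT_measurable; first exact: countableP.
  by move=> S; case: asboolP => _; [apply: measurable_cluster_eq | apply: measurable0].
apply/seteqP; split=> om /=.
  move=> [fC PC]; exists (fset_set (Defs.cluster om y)) => //.
  by rewrite fset_setK //; case: asboolP.
move=> [S _]; case: asboolP => // PS CS; rewrite /cluster_event /= CS.
by split=> //; apply: finite_fset.
Qed.

Lemma measurable_large_finite_origin n :
  measurable (large_finite_origin n : set (configT d)).
Proof. by rewrite large_finite_originE; apply: measurable_cluster_event. Qed.

Lemma measurable_mass_center_event n x :
  measurable (mass_center_event n x : set (configT d)).
Proof.
rewrite mass_center_eventE; apply: countable_bigcupT_measurable => [|y].
  exact: countableP.
exact: measurable_cluster_event.
Qed.

End Measurability.

Section FineProbability.
Context (dm : measure_display) (T : measurableType dm) (R : realType).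
Variable P : probability T R.
Local Notation pr A := (fine (P A)).

Lemma probability_fineK (A : set T) : measurable A -> (pr A)%:E = P A.
Proof.
move=> mA; rewrite fineK // ge0_fin_numE ?measure_ge0 //.
by apply: le_lt_trans (probability_le1 P mA) _; rewrite ltry.
Qed.

Lemma le_fine_probability (A B : set T) : measurable A -> measurable B ->
  A `<=` B -> pr A <= pr B.
Proof.
move=> mA mB AB; rewrite -lee_fin !probability_fineK //.
by apply: le_measure => //; rewrite inE.
Qed.

Lemma le_fine_probability_sum (I : eqType) (s : seq I) (F : I -> set T) (A : set T) :
  measurable A -> (forall i, measurable (F i)) ->
  (forall t, A t -> exists2 i, i \in s & F i t) -> pr A <= \sum_(i <- s) pr (F i).
Proof.
move=> + mF; elim: s A => [|i s IH] A mA AF.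
  suff -> : A = set0 by rewrite measure0 big_nil.
  by apply/seteqP; split=> t // /AF [].
have mAFi : measurable (A `\` F i) by apply: measurableD.
apply: le_trans (_ : pr (F i `|` (A `\` F i)) <= _).
  apply: le_fine_probability => //; first exact: measurableU.
  by move=> t At; have [?|?] := pselect (F i t); [left | right].
rewrite big_cons -lee_fin probability_fineK; last exact: measurableU.
apply: le_trans (measureU2 _ _ _) _ => //; rewrite EFinD.
apply: leeD; first by rewrite probability_fineK.
suff : (P (A `\` F i) <= (\sum_(j <- s) pr (F j))%:E)%E by [].
rewrite -probability_fineK // lee_fin; apply: IH => // t [At nFit].
have [j] := AF t At; rewrite inE => /orP[/eqP-> //|js Fjt].
by exists j.
Qed.

Lemma le_fine_probability_series (F : nat -> set T) (A : set T) (B : R) :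
  measurable A -> (forall n, measurable (F n)) -> A `<=` \bigcup_n F n ->
  (forall K, \sum_(n < K) pr (F n) <= B) -> pr A <= B.
Proof.
move=> mA mF AF FB; rewrite -lee_fin probability_fineK //.
apply: le_trans (measure_sigma_subadditive P mF mA AF) _.
apply: lime_le; first by apply: is_cvg_nneseries => n _ _; apply: measure_ge0.
apply: nearW => K /=; rewrite big_mkord.
under eq_bigr do rewrite -probability_fineK //.
by rewrite sumEFin lee_fin.
Qed.

End FineProbability.

Lemma size_box d N : size (box d N) = (N.*2.+1 ^ d)%N.
Proof. by rewrite size_map -cardT card_ffun !card_ord. Qed.

Lemma mem_box d N (z : vtx d) : (forall i, `|z i| <= N%:Z) -> z \in box d N.
Proof.
move=> zN; apply/mapP; exists [ffun i => inord (absz (z i + N%:Z))].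
  by rewrite mem_enum.
apply/ffunP => i; have /andP[zN0 zN2] : 0 <= z i + N%:Z <= (N.*2)%:Z.
  by move: (zN i); rewrite ler_norml -addnn PoszD lerD2r -lerBlDr sub0r.
by rewrite !ffunE inordK ?gez0_abs ?addrK // ltnS -lez_nat gez0_abs.
Qed.

Section TranslationInvariance.
Variables (d : nat) (R : realType) (Phi : probability (configT d) R).
Hypothesis Phi_translate : forall (x : vtx d) (A : set (configT d)), measurable A ->
  Phi (translate x @^-1` A) = Phi A.
Local Notation pr A := (fine (Phi A)).

Lemma pr_cluster_event_translate t y Q :
  pr (cluster_event (y + t) (fun C => Q (translate_set t C))) = pr (cluster_event y Q).
Proof.
by rewrite -cluster_event_translate Phi_translate //; apply: measurable_cluster_event.
Qed.

Lemma pr_cluster_size_le y m :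
  pr (cluster_event y (fun C => csize C = m)) <= pr (large_finite_origin m).
Proof.
have -> : cluster_event y (fun C => csize C = m) =
    cluster_event (0 + y) (fun C => csize (translate_set y C) = m).
  by rewrite add0r; apply: eq_cluster_event => C fC; rewrite csize_translate_set.
rewrite (pr_cluster_event_translate _ _ (fun C => csize C = m)); apply: le_fine_probability.
- exact: measurable_cluster_event.
- exact: measurable_large_finite_origin.
- by move=> om [fC Cm]; split; rewrite ?Cm.
Qed.

Lemma pr_centered_cluster_le n x w : (0 < n)%N ->
  pr (cluster_event 0 (fun C => (n <= csize C <= n.*2)%N /\ mass_center C = w))
  <= pr (mass_center_event n x).
Proof.
move=> n0; rewrite -(pr_cluster_event_translate (x - w)).
apply: le_fine_probability; [exact: measurable_cluster_event|
  exact: measurable_mass_center_event|].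
move=> om [fC [/andP[nC _]]]; rewrite add0r in fC nC *.
rewrite csize_translate_set // in nC; rewrite mass_center_translate_set //; last first.
  exact: leq_trans nC.
by move/eqP; rewrite subr_eq addrCA subrr addr0 => /eqP Cx; exists (x - w).
Qed.

(* Either [|C(0)| > 2n], or the mass center of [C(0)] lies in the box of radius [2n],
   and by translation invariance each of its possible positions costs at most [b_n]. *)
Lemma large_le_mass_center n x : (0 < n)%N ->
  pr (large_finite_origin n) <=
  (n.*2.*2.+1 ^ d)%:R * pr (mass_center_event n x) + pr (large_finite_origin n.*2.+1).
Proof.
move=> n0; pose E (w : vtx d) := cluster_event 0
  (fun C => (n <= csize C <= n.*2)%N /\ mass_center C = w).
pose F (o : option (vtx d)) :=
  if o is Some w then E w else large_finite_origin n.*2.+1.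
have mF o : measurable (F o : set (configT d)).
  case: o => [w|]; first exact: measurable_cluster_event.
  exact: measurable_large_finite_origin.
have cover om : large_finite_origin n om ->
    exists2 o, o \in None :: map Some (box d n.*2) & F o om.
  move=> [fC nC]; have [Cn|Cn] := leqP n.*2.+1 (csize (Defs.cluster om 0)).
    by exists None; rewrite ?inE.
  exists (Some (mass_center (Defs.cluster om 0))); last by split=> //; rewrite nC -ltnS.
  rewrite inE map_f // mem_box // => i.
  have := mass_center_cluster_dist i fC.
  rewrite [X in _ - X]ffunE subr0 => /le_trans; apply.
  by rewrite lerBlDr -PoszD lez_nat addn1 ltnW.
have mA := @measurable_large_finite_origin d n.
apply: le_trans (le_fine_probability_sum Phi mA mF cover) _.
rewrite big_cons big_map addrC lerD2r -size_box mulr_natl -sumr_const_seq.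
by apply: ler_sum => w _; apply: pr_centered_cluster_le.
Qed.

(* A cluster of size [m >= n] with mass center [x] is the cluster of a vertex within
   sup-distance [m] of [x], and that vertex's cluster has size exactly [m]. *)
Lemma mass_center_le_series n x (B : R) :
  (forall K, \sum_(k < K) ((k + n).*2.+1 ^ d)%:R * pr (large_finite_origin (k + n)) <= B) ->
  pr (mass_center_event n x) <= B.
Proof.
move=> sumB; pose E k w := cluster_event (x + w) (fun C => csize C = (k + n)%N).
pose F k : set (configT d) := \bigcup_(w in [set` box d (k + n)]) E k w.
have mE k w : measurable (E k w : set (configT d)) by apply: measurable_cluster_event.
have mF k : measurable (F k : set (configT d)).
  by apply: fin_bigcup_measurable => //; apply: finite_seq.
apply: (@le_fine_probability_series _ _ _ Phi F _ B (measurable_mass_center_event n x) mF).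
  move=> om [y [fC [nC Cx]]]; exists (csize (Defs.cluster om y) - n)%N => //.
  exists (y - x); last by rewrite /E subnK // addrC subrK.
  rewrite /= mem_box // subnK // => i; rewrite !ffunE -Cx distrC.
  by apply: le_trans (mass_center_cluster_dist i fC) _; rewrite gerBl.
move=> K; apply: le_trans (sumB K); apply: ler_sum => k _.
rewrite -size_box mulr_natl -sumr_const_seq.
apply: le_trans (le_fine_probability_sum Phi (s := box d (k + n)) (mF k) (mE k) _) _.
  by move=> om [w wb Ew]; exists w.
by apply: ler_sum => w _; apply: pr_cluster_size_le.
Qed.

End TranslationInvariance.

Lemma natrX_le_expR_sqrt (R : realType) (D : nat) (e : R) : 0 < e ->
  exists2 C : R, 0 < C & forall m : nat, m%:R ^+ D <= C * expR (e * Num.sqrt m%:R).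
Proof.
(* [expR x >= 1 + x^(2D+2)/(2D+2)!] at [x = e sqrt m], and [m^D <= 1 + m^(D+1)]. *)
move=> e0; set c : R := e ^+ D.*2.+2 / (D.*2.+2)`!%:R.
have c0 : 0 < c by rewrite divr_gt0 ?exprn_gt0 ?ltr0n ?fact_gt0.
exists (Num.max 1 c^-1); first by rewrite lt_max ltr01.
move=> m; have m0 : (0 : R) <= m%:R by rewrite ler0n.
have mD : m%:R ^+ D <= 1 + m%:R ^+ D.+1 :> R.
  case: m m0 => [|m] _.
    by rewrite expr0n exprS mul0r addr0; case: (D == 0%N); rewrite ?ler01 ?lexx.
  rewrite exprS -[X in X <= _]add0r lerD // ler_peMl ?exprn_ge0 ?ler1n //.
have sqrtX : Num.sqrt m%:R ^+ D.*2.+2 = m%:R ^+ D.+1 :> R.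
  by rewrite -doubleS -mul2n exprM sqr_sqrtr.
have := expR_ge1Dxn D.*2.+1 (mulr_ge0 (ltW e0) (sqrtr_ge0 (m%:R : R))).
rewrite exprMn sqrtX mulrAC -/c => /(ler_wpM2l _).
move=> /(_ (Num.max 1 c^-1)); rewrite le_max ler01 => /(_ isT); apply: le_trans.
apply: le_trans mD _; rewrite mulrDr mulr1 mulrA; apply: lerD; first by rewrite le_max lexx.
rewrite -[X in X <= _]mul1r; apply: ler_wpM2r; first exact: exprn_ge0.
by rewrite -(mulVf (lt0r_neq0 c0)) ler_pM2r // le_max lexx orbT.
Qed.

Section SurfaceOrder.
Variables (R : realType) (d : nat).
Hypothesis d2 : (2 <= d)%N.

Definition surface_exponent : R := (d%:R - 1) / d%:R.

Definition surface_order (n : nat) : R := n%:R `^ surface_exponent.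

Let d_ge2 : (2 : R) <= d%:R. Proof. by rewrite ler_nat. Qed.

Lemma surface_exponent_gt0 : 0 < surface_exponent.
Proof. by move: d_ge2 => ?; apply: divr_gt0; lra. Qed.

Lemma surface_exponent_ge_half : 2^-1 <= surface_exponent.
Proof. by move: d_ge2 => ?; rewrite /surface_exponent ler_pdivlMr; lra. Qed.

Lemma surface_order_gt0 n : (0 < n)%N -> 0 < surface_order n.
Proof. by move=> n0; apply: powR_gt0; rewrite ltr0n. Qed.

Lemma le_surface_order : {homo surface_order : m n / (m <= n)%N >-> m <= n}.
Proof.
move=> m n mn; apply: ge0_ler_powR; rewrite ?nnegrE ?ler0n ?ler_nat //.
exact: ltW surface_exponent_gt0.
Qed.

Lemma sqrt_le_surface_order n : Num.sqrt n%:R <= surface_order n.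
Proof.
case: n => [|n].
  by rewrite /surface_order powR0 ?sqrtr0 // gt_eqF // surface_exponent_gt0.
rewrite -powR12_sqrt ?ler0n //; apply: ler_powR; last exact: surface_exponent_ge_half.
by rewrite ler1n.
Qed.

Lemma surface_order_doubling :
  exists2 g : R, 1 < g & forall n, g * surface_order n <= surface_order n.*2.+1.
Proof.
exists (2 `^ surface_exponent) => [|n].
  have one_pow : 1 `^ surface_exponent = 1 :> R by rewrite powR1.
  rewrite -[X in X < _]one_pow; apply: gt0_ltr_powR; rewrite ?nnegrE ?ltr1n //.
  exact: surface_exponent_gt0.
apply: le_trans (le_surface_order (leqnSn _)).
by rewrite /surface_order -powRM // -natrM mul2n.
Qed.

Lemma surface_order_near_ge (M : R) : \forall n \near \oo, M <= surface_order n.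
Proof.
exists (Num.truncn (M ^+ 2)).+1 => // n /= Mn; apply: le_trans (sqrt_le_surface_order n).
apply: le_trans (ler_norm M) _; rewrite -sqrtr_sqr ler_sqrt ?ler0n //.
by apply/ltW/(lt_le_trans (truncnS_gt _)); rewrite ler_nat.
Qed.

Lemma natrX_le_expR_surface_order (D : nat) (e : R) : 0 < e ->
  exists2 C : R, 0 < C & forall m : nat, m%:R ^+ D <= C * expR (e * surface_order m).
Proof.
move=> e0; have [C C0 DC] := natrX_le_expR_sqrt D e0; exists C => // m.
apply: le_trans (DC m) _; apply: ler_wpM2l; first exact: ltW.
by rewrite ler_expR; apply: ler_wpM2l; [exact: ltW | exact: sqrt_le_surface_order].
Qed.

End SurfaceOrder.

Section ExponentialRate.
Variables (R : realType) (L : nat -> R) (w : R).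
Hypothesis L_gt0 : \forall n \near \oo, 0 < L n.

Lemma near_expR_bounds (a : nat -> R) : (fun n => ln (a n) / L n) @ \oo --> - w ->
  forall e, 0 < e -> e < w ->
  \forall n \near \oo, expR (- (w + e) * L n) <= a n <= expR (- (w - e) * L n).
Proof.
move=> /cvgrPdist_le aw e e0 ew; apply: filterS2 L_gt0 (aw e e0) => n Ln.
rewrite ler_norml => /andP[lo hi].
have an0 : 0 < a n.
  rewrite ltNge; apply/negP => an0; move: lo hi; rewrite ln0 // mul0r subr0; lra.
have lo' : - (w + e) <= ln (a n) / L n by lra.
have hi' : ln (a n) / L n <= - (w - e) by lra.
rewrite ler_pdivlMr // in lo'; rewrite ler_pdivrMr // in hi'.
by rewrite -[a n]lnK ?posrE // !ler_expR lo' hi'.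
Qed.

Lemma cvg_of_near_expR_bounds (b : nat -> R) :
  (forall e, 0 < e ->
    \forall n \near \oo, expR (- (w + e) * L n) <= b n <= expR (- (w - e) * L n)) ->
  (fun n => ln (b n) / L n) @ \oo --> - w.
Proof.
move=> bw; apply/cvgrPdist_le => e e0; apply: filterS2 L_gt0 (bw e e0) => n Ln /andP[lo hi].
have bn0 : 0 < b n := lt_le_trans (expR_gt0 _) lo.
rewrite -ler_ln ?posrE ?expR_gt0 // expRK in lo.
rewrite -ler_ln ?posrE ?expR_gt0 // expRK in hi.
have lo' : - (w + e) <= ln (b n) / L n by rewrite ler_pdivlMr.
have hi' : ln (b n) / L n <= - (w - e) by rewrite ler_pdivrMr.
by rewrite ler_norml; apply/andP; split; lra.
Qed.

End ExponentialRate.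

Lemma sum_inv_sqr_le2 (R : realType) (n K : nat) : (0 < n)%N ->
  \sum_(k < K) ((k + n)%:R ^+ 2)^-1 <= 2 :> R.
Proof.
move=> n0; have inv_sqr_le t : 1 <= t -> (t ^+ 2)^-1 <= 2 / t - 2 / (t + 1) :> R.
  move=> t1; have t0 : 0 < t by lra.
  have -> : 2 / t - 2 / (t + 1) = (2 * t / (t + 1)) / t ^+ 2 by field; lra.
  rewrite ler_pdivlMr ?exprn_gt0 // mulVf ?gt_eqF ?exprn_gt0 //.
  by rewrite ler_pdivlMr; lra.
suff telescope : \sum_(k < K) ((k + n)%:R ^+ 2)^-1 <= 2 / n%:R - 2 / (K + n)%:R :> R.
  apply: le_trans telescope (le_trans (_ : _ <= 2 / n%:R) _).
    by rewrite gerBl divr_ge0 ?ler0n.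
  by rewrite ler_pdivrMr ?ltr0n // ler_peMr ?ler1n.
elim: K => [|K IH]; first by rewrite big_ord0 add0n subrr.
rewrite big_ord_recr /=; apply: le_trans (lerD IH (inv_sqr_le _ _)) _.
  by rewrite ler1n addn_gt0 n0 orbT.
by rewrite addrA subrK addSn natr1.
Qed.

Section RateAlgebra.
Variable R : realType.

(* With [A = a_n >= E], [A2 = a_(2n+1)], [P = (4n+1)^d] and [X = exp(eps s_n)] absorbing
   both the factor [2] and the polynomial [P / K]. *)
Lemma lower_rate_ineq (E X P K A A2 b : R) :
  0 < E -> 0 < P -> 2 <= X -> 2 * K <= X -> P <= K * X ->
  E <= A -> A2 <= E / X -> A <= P * b + A2 -> E / X ^+ 2 <= b.
Proof.
move=> E0 P0 X2 KX PKX EA A2E APb; have X0 : 0 < X by lra.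
have EX : E / X <= E / 2 by rewrite ler_pM2l // lef_pV2 ?posrE //; lra.
have EPb : E <= 2 * (P * b) by lra.
have b0 : 0 <= b by rewrite -(pmulr_rge0 _ P0); lra.
have PbKX : P * b <= K * X * b by apply: ler_wpM2r.
have KXX : 2 * K * X * b <= X * X * b by apply: ler_wpM2r => //; apply: ler_wpM2r; lra.
by rewrite ler_pdivrMr ?exprn_gt0 // expr2; lra.
Qed.

(* The [m]-th term [P A = (2m+1)^d a_m] of the series, with [p = m], is [O(Y X / m^2)]. *)
Lemma upper_rate_term_ineq (D : nat) (P A p Y T C X : R) :
  0 <= A -> A <= Y -> 0 < p -> 0 <= T -> P <= T * p ^+ D -> p ^+ (D + 2) <= C * X ->
  P * A <= T * C * X * Y / p ^+ 2.
Proof.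
move=> A0 AY p0 T0 PT pCX; rewrite ler_pdivlMr ?exprn_gt0 //.
have TpY : P * A <= T * p ^+ D * Y.
  apply: le_trans (ler_wpM2r A0 PT) _; apply: ler_wpM2l AY.
  by apply: mulr_ge0 => //; apply/exprn_ge0/ltW.
apply: le_trans (ler_wpM2r (ltW (exprn_gt0 2 p0)) TpY) _.
rewrite mulrAC -(mulrA T (p ^+ D)) -exprD -(mulrA T C).
by apply: ler_wpM2r; [exact: le_trans A0 AY | apply: ler_wpM2l].
Qed.

Lemma small_rate_margin (w e g : R) : 0 < w -> 0 < e -> 1 < g ->
  exists e', [/\ 0 < e', e' <= e / 3, e' < w & w + 2 * e' <= (w - e') * g].
Proof.
move=> w0 e0 g1; exists (Num.min (e / 3) (w * (g - 1) / (g + 2))).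
set e' := Num.min _ _; have g2 : 0 < g + 2 by lra.
have e'g : e' * (g + 2) <= w * (g - 1) by rewrite -ler_pdivlMr // ge_min lexx orbT.
split; first by rewrite lt_min !divr_gt0 ?mulr_gt0 //; lra.
- by rewrite ge_min lexx.
- rewrite -(ltr_pM2r g2); apply: le_lt_trans e'g _; rewrite ltr_pM2l //; lra.
- lra.
Qed.

End RateAlgebra.

Section RateTransfer.
Variables (R : realType) (d : nat).
Hypothesis d2 : (2 <= d)%N.
Variables (a b : nat -> R) (w : R).
Hypothesis w_gt0 : 0 < w.
Hypothesis a_le : forall n, (0 < n)%N -> a n <= (n.*2.*2.+1 ^ d)%:R * b n + a n.*2.+1.
Hypothesis b_le : forall n B,
  (forall K, \sum_(k < K) ((k + n).*2.+1 ^ d)%:R * a (k + n)%N <= B) -> b n <= B.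
Hypothesis a_rate : (fun n => ln (a n) / surface_order R d n) @ \oo --> - w.
Local Notation s := (surface_order R d).

Let s_gt0 : \forall n \near \oo, 0 < s n.
Proof. by exists 1%N => // n; apply: surface_order_gt0. Qed.

Let expR_near_ge (c e : R) : 0 < c -> 0 < e -> \forall n \near \oo, c <= expR (e * s n).
Proof.
move=> c0 e0; have [M _ Ms] := surface_order_near_ge d2 (ln c / e).
exists M => // n /Ms; rewrite ler_pdivrMr // => lnc.
by rewrite -[c]lnK ?posrE // ler_expR mulrC.
Qed.

Let a_double_le e' g : (forall n, g * s n <= s n.*2.+1) -> 0 < e' -> e' < w ->
  w + 2 * e' <= (w - e') * g ->
  \forall n \near \oo, a n.*2.+1 <= expR (- (w + 2 * e') * s n).
Proof.
move=> s_double e'0 e'w e'g; have [N _ aN] := near_expR_bounds s_gt0 a_rate e'0 e'w.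
exists N => // n /= Nn; have Nn2 : (N <= n.*2.+1)%N by move: Nn; clear; lia.
have /andP[_] := aN n.*2.+1 Nn2; move/le_trans; apply; rewrite ler_expR.
have s_ge0 : 0 <= s n by apply: powR_ge0.
have h1 := ler_wpM2l (_ : 0 <= w - e') (s_double n); rewrite subr_ge0 ltW // in h1.
have h2 : (w + 2 * e') * s n <= (w - e') * g * s n by apply: ler_wpM2r.
lra.
Qed.

Lemma rate_lower_bound e : 0 < e -> \forall n \near \oo, expR (- (w + e) * s n) <= b n.
Proof.
move=> e0; have [g g1 s_double] := surface_order_doubling R d2.
have [e' [e'0 e'e e'w e'g]] := small_rate_margin w_gt0 e0 g1.
have [C C0 nC] := natrX_le_expR_surface_order d2 d e'0.
set K := 5 ^+ d * C.
have K'0 : 0 < 2 * Num.max 1 K by rewrite mulr_gt0 // lt_max ltr01.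
have [N _ aN] := near_expR_bounds s_gt0 a_rate e'0 e'w.
have [M _ XK] := expR_near_ge K'0 e'0.
have [M' _ a2] := a_double_le s_double e'0 e'w e'g.
exists (maxn (maxn N M) (maxn M' 1)) => // n /=.
rewrite !geq_max => /andP[/andP[Nn Mn] /andP[M'n n0]].
have {}XK := XK n Mn; have sn0 := surface_order_gt0 R d n0.
set E := expR (- (w + e') * s n); set X := expR (e' * s n).
have XE : E / X ^+ 2 = expR (- (w + 3 * e') * s n).
  by rewrite /E /X -expRM_natl -expRB; congr expR; ring.
apply: le_trans (_ : E / X ^+ 2 <= _).
  rewrite XE ler_expR !mulNr lerN2; apply: ler_wpM2r; [exact: ltW | lra].
apply: (lower_rate_ineq (P := (n.*2.*2.+1 ^ d)%:R) (K := K) (A := a n) (A2 := a n.*2.+1)).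
- exact: expR_gt0.
- by rewrite ltr0n expn_gt0.
- by apply: le_trans XK; rewrite ler_pMr // le_max lexx.
- by apply: le_trans XK; rewrite ler_wpM2l // le_max lexx orbT.
- apply: (@le_trans _ _ ((5 * n) ^ d)%:R).
    by rewrite ler_nat leq_exp2r ?(ltnW d2) //; move: n0; clear; lia.
  rewrite expnMn natrM !natrX /K -mulrA.
  by apply: ler_wpM2l; [exact: exprn_ge0 | exact: nC].
- by have /andP[] := aN n Nn.
- by rewrite -expRB; apply: le_trans (a2 n M'n) _; rewrite ler_expR; lra.
- exact: a_le.
Qed.

Let series_term_le e' C N n k : 0 < e' -> 2 * e' <= w -> 0 <= C ->
  (forall m, m%:R ^+ (d + 2) <= C * expR (e' * s m)) ->
  (forall m, (N <= m)%N -> expR (- (w + e') * s m) <= a m <= expR (- (w - e') * s m)) ->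
  (N <= n)%N -> (0 < n)%N ->
  ((k + n).*2.+1 ^ d)%:R * a (k + n)%N
    <= 3 ^+ d * C * expR (- (w - 2 * e') * s n) * ((k + n)%:R ^+ 2)^-1.
Proof.
move=> e'0 e'w2 C0 nC aN Nn n0; set m := (k + n)%N.
have m0 : (0 < m)%N by rewrite addn_gt0 n0 orbT.
have /andP[am_lo am_hi] := aN m (leq_trans Nn (leq_addl _ _)).
apply: le_trans (upper_rate_term_ineq (T := 3 ^+ d) (C := C) _ am_hi _ _ _ (nC m)) _.
- exact: le_trans (expR_ge0 _) am_lo.
- by rewrite ltr0n.
- exact: exprn_ge0.
- rewrite -natrX -natrX -natrM -expnMn ler_nat leq_exp2r ?(ltnW d2) //.
  by move: m0; clear; lia.
apply: ler_wpM2r; first by rewrite invr_ge0 exprn_ge0 // ler0n.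
rewrite -mulrA; apply: ler_wpM2l; first by rewrite mulr_ge0 ?exprn_ge0.
rewrite -expRD ler_expR.
have : (w - 2 * e') * s n <= (w - 2 * e') * s m.
  by apply: ler_wpM2l; [lra | apply: le_surface_order => //; rewrite leq_addl].
lra.
Qed.

Lemma rate_upper_bound e : 0 < e -> \forall n \near \oo, b n <= expR (- (w - e) * s n).
Proof.
move=> e0; set e' := Num.min (e / 3) (w / 2).
have e'e : e' <= e / 3 by rewrite ge_min lexx.
have e'w2 : e' <= w / 2 by rewrite ge_min lexx orbT.
have e'0 : 0 < e' by rewrite lt_min !divr_gt0.
have [C C0 nC] := natrX_le_expR_surface_order d2 (d + 2) e'0.
set K := 3 ^+ d * C * 2.
have K0 : 0 < K by rewrite !mulr_gt0 ?exprn_gt0.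
have e'w : e' < w by lra.
have [N _ aN] := near_expR_bounds s_gt0 a_rate e'0 e'w.
have [M _ XK] := expR_near_ge K0 e'0.
exists (maxn (maxn N M) 1) => // n /=; rewrite !geq_max => /andP[/andP[Nn Mn] n0].
have {}XK := XK n Mn; have sn0 := surface_order_gt0 R d n0.
apply: b_le => k'; apply: le_trans (_ : _ <= K * expR (- (w - 2 * e') * s n)) _; last first.
  apply: le_trans (ler_wpM2r (expR_ge0 _) XK) _.
  rewrite -expRD ler_expR.
  have : 3 * e' * s n <= e * s n by apply: ler_wpM2r; [exact: ltW | lra].
  lra.
have e'w2' : 2 * e' <= w by lra.
have term_le (k : 'I_k') (_ : true) := series_term_le k e'0 e'w2' (ltW C0) nC aN Nn n0.
apply: le_trans (ler_sum _ term_le) _.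
rewrite -mulr_sumr /K [X in _ <= X]mulrAC; apply: ler_wpM2l; last exact: sum_inv_sqr_le2.
by rewrite !mulr_ge0 ?exprn_ge0 ?expR_ge0 ?ltW.
Qed.

Theorem ln_rate_transfer : (fun n => ln (b n) / s n) @ \oo --> - w.
Proof.
apply: (@cvg_of_near_expR_bounds R s w s_gt0 b) => e e0.
by apply: filterS2 (rate_lower_bound e0) (rate_upper_bound e0) => n -> ->.
Qed.

End RateTransfer.

Unset Implicit Arguments.

Theorem lemma8 (R : realType) (d : nat) (p q w1 : R)
  (Phi : probability (configT d) R) :
  (2 <= d)%N -> 1 <= q -> p <= 1 -> phat_c d q < p ->
  is_FK_limit p q Phi ->
  (forall (x : vtx d) (A : set (configT d)), measurable A ->
      Phi ((@translate d x) @^-1` A) = Phi A) ->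
  0 < w1 ->
  (fun n : nat => ln (fine (Phi (@large_finite_origin d n)))
                  / (n%:R `^ ((d%:R - 1) / d%:R))) @ \oo --> - w1 ->
  forall x : vtx d,
    (fun n : nat => ln (fine (Phi (@mass_center_event d n x)))
                    / (n%:R `^ ((d%:R - 1) / d%:R))) @ \oo --> - w1.
Proof.
(* The FK hypotheses only serve to make the rate [w1] exist; the transfer of the rate
   uses nothing but translation invariance. *)
move=> d2 _ _ _ _ Phi_translate w1_gt0 large_rate x.
apply: (ln_rate_transfer d2 w1_gt0 _ _ large_rate).
- by move=> n n0; apply: large_le_mass_center.
- by move=> n B; apply: mass_center_le_series.
Qed.
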